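(* Let $p$ be a prime with $p\equiv\pm1\pmod{10}$ and $n$ an integer such that $\mathcal{S}_{p,n}:=p^2 16^n+1$ is prime. Let $E$ be the elliptic curve $y^2=x^3-x$ and $E_{30}$ the elliptic curve $30y^2=x^3-x$. Then $E_{30}(\mathbb{F}_{\mathcal{S}_{p,n}})\cong E(\mathbb{F}_{\mathcal{S}_{p,n}})$ (indeed $30$ is a square modulo $\mathcal{S}_{p,n}$, so $E_{30}\cong E$ over $\mathbb{F}_{\mathcal{S}_{p,n}}$). *)

From mathcomp Require Import all_boot all_order all_algebra.
Set Implicit Arguments. Unset Strict Implicit. Unset Printing Implicit Defensive.
Import GRing.Theory.
Local Open Scope ring_scope.

(* Projective points are represented as [option (F * F)]: [None] is the point
   at infinity O, [Some (x, y)] an affine point. *)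
Definition ec_pt (F : fieldType) := option (F * F).

Definition on_ec (F : fieldType) (d : F) (P : ec_pt F) : bool :=
  match P with
  | None => true
  | Some (x, y) => d * y ^+ 2 == x ^+ 3 - x
  end.

Definition ec_add (F : fieldType) (d : F) (P Q : ec_pt F) : ec_pt F :=
  match P, Q with
  | None, _ => Q
  | _, None => P
  | Some (x1, y1), Some (x2, y2) =>
    if x1 == x2 then
      if y1 + y2 == 0 then None
      else
        let l := (3%:R * x1 ^+ 2 - 1) / (2%:R * d * y1) in
        let x3 := d * l ^+ 2 - x1 - x2 in
        Some (x3, l * (x1 - x3) - y1)
    else
      let l := (y2 - y1) / (x2 - x1) in
      let x3 := d * l ^+ 2 - x1 - x2 in
      Some (x3, l * (x1 - x3) - y1)
  end.

Definition ec_groups_iso (F : fieldType) (d1 d2 : F) : Prop :=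
  exists f : ec_pt F -> ec_pt F,
    [/\ forall P, on_ec d1 P -> on_ec d2 (f P),
        {in on_ec d1 &, injective f},
        forall Q, on_ec d2 Q -> exists2 P, on_ec d1 P & f P = Q
      & {in on_ec d1 &, forall P Q, f (ec_add d1 P Q) = ec_add d2 (f P) (f Q)}].

Definition S_pn (p n : nat) : nat := (p ^ 2 * 16 ^ n + 1)%N.

From mathcomp Require Import all_boot all_order all_algebra cyclic finfield.
From mathcomp Require Import zify ring.
Set Implicit Arguments. Unset Strict Implicit. Unset Printing Implicit Defensive.
Import GRing.Theory.
Local Open Scope ring_scope.

(* Write q = S_{p,n} = 2h + 1.  The map (x, y) |-> (x, t y) is an isomorphism
   from E_{t^2} onto E_1, so it suffices that 30 is a square in F_q, i.e. (Euler)
   that 30^h = 1.  As q = (p 4^n)^2 + 1, F_q contains a square root i of -1, and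
   (1 + i)^2 = 2 i with i^h = 1 (16 divides q - 1), so 2^h = (-1)^h = 1.  Since
   p = +-1 (mod 10), q = 2 (mod 3) and q = 2 (mod 5): q is a non-residue modulo
   3 and 5, and the quadratic Gauss sums modulo the cyclotomic polynomials
   Phi_3 and Phi_5 give (-3)^h = 5^h = -1.  Hence 30^h = 2^h (-1)^h (-3)^h 5^h = 1. *)

Section OddFiniteField.
Variables (F : finFieldType) (h : nat).
Hypothesis cardF : #|F| = (h.*2).+1.

Lemma expf_half2_eq1 (y : F) : y != 0 -> y ^+ h.*2 = 1.
Proof.
by move=> y0; apply: (mulfI y0); rewrite -exprS -cardF expf_card mulr1.
Qed.

Lemma sqr_of_expf_half (x : F) : x ^+ h = 1 -> exists y, y ^+ 2 = x.
Proof.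
move=> xh.
have h2_gt0 : (0 < h.*2)%N by have := finNzRing_gt1 F; rewrite cardF.
pose rs := enum (predC1 (0 : F)).
have rs_roots : all (h.*2).-unity_root rs.
  by apply/allP=> z; rewrite mem_enum unity_rootE => /expf_half2_eq1 ->.
have rs_size : (h.*2 <= size rs)%N by rewrite -cardE cardC1 cardF.
have /hasP[w _ w_prim] := has_prim_root h2_gt0 rs_roots (enum_uniq _) rs_size.
have [[i _] /= xi] : {i : 'I_h.*2 | x = w ^+ i}.
  by apply: (prim_rootP w_prim); rewrite -addnn exprD xh mulr1.
have : (h.*2 %| i * h)%N by rewrite (prim_order_dvd w_prim) exprM -xi xh.
rewrite -muln2 [(i * h)%N]mulnC dvdn_pmul2l; last by rewrite -double_gt0.
by case/dvdnP=> k ik; exists (w ^+ k); rewrite xi ik -exprM.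
Qed.

Lemma natr2_expf_half_eq1 (i : F) :
  2%:R != 0 :> F -> i ^+ 2 = -1 -> (4 %| h)%N -> 2%:R ^+ h = 1 :> F.
Proof.
move=> two_neq0 i2 /dvdnP[k hk].
have i_neq0 : i != 0.
  by apply: contraPneq i2 => ->; rewrite expr0n => /esym/eqP; rewrite oppr_eq0 oner_eq0.
have sqr_1i : (1 + i) ^+ 2 = 2%:R * i by rewrite sqrrD i2 expr1n; ring.
have ih : i ^+ h = 1 by rewrite hk mulnC exprM -[4%N]/(2 * 2)%N exprM i2 sqrrN !expr1n.
have : (1 + i) ^+ h.*2 = 1.
  apply: expf_half2_eq1; apply: contraNneq (mulf_neq0 two_neq0 i_neq0) => i_eqN1.
  by rewrite -sqr_1i i_eqN1 expr0n.
by rewrite -mul2n exprM sqr_1i exprMn ih mulr1.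
Qed.

End OddFiniteField.

Lemma dvdp_subXX (F : fieldType) (m a b : {poly F}) k :
  m %| a - b -> m %| a ^+ k - b ^+ k.
Proof. by move=> dvd_ab; rewrite subrXX dvdp_mulr. Qed.

Lemma dvdp_subXnX (F : fieldType) (m : {poly F}) N k r :
  m %| 'X^N - 1 -> m %| 'X^(N * k + r) - 'X^r.
Proof.
move=> dvd_m; rewrite exprD exprM -[X in _ - X]mul1r -mulrBl dvdp_mulr //.
by rewrite -(expr1n _ k) dvdp_subXX.
Qed.

Lemma size_cofactor_Xn_sub1 (F : fieldType) (m : {poly F}) N :
  (0 < N)%N -> ('X - 1) * m = 'X^N - 1 -> size m = N.
Proof.
move=> N_gt0 def_m.
have size_Xn_sub1 := size_XnsubC (1 : F) N_gt0; rewrite polyC1 in size_Xn_sub1.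
have m_neq0 : m != 0.
  by apply: contra_eq_neq def_m => ->; rewrite mulr0 eq_sym -size_poly_eq0 size_Xn_sub1.
move: size_Xn_sub1; rewrite -def_m -polyC1 mulrC size_Mmonic ?monicXsubC // size_XsubC.
by rewrite addn2 => -[].
Qed.

(* Modulo m, t^(2h+1) is d^h t by the first divisibility and -t by the second,
   and t is invertible since t^2 = d. *)
Lemma expf_half_eqN1_dvdp (F : fieldType) (h : nat) (m t : {poly F}) (d : F) :
  (1 < size m)%N -> d != 0 ->
  m %| t ^+ 2 - d%:P -> m %| t ^+ (h.*2).+1 + t -> d ^+ h = -1.
Proof.
move=> m_gt1 d_neq0 dvd_sqr dvd_frob.
set c := d ^+ h + 1.
have dvd_tc : m %| t * c%:P.
  have -> : t * c%:P = (t ^+ (h.*2).+1 + t) - t * (t ^+ h.*2 - (d ^+ h)%:P).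
    by rewrite /c polyCD polyC1 exprS; ring.
  rewrite dvdp_sub ?dvdp_mull // -mul2n exprM rmorphXn.
  exact: dvdp_subXX.
have dvd_dc : m %| (d * c)%:P.
  have -> : (d * c)%:P = t * (t * c%:P) - (t ^+ 2 - d%:P) * c%:P by rewrite polyCM; ring.
  by rewrite dvdp_sub ?(dvdp_mull _ dvd_tc) ?(dvdp_mulr _ dvd_sqr).
apply/eqP; rewrite -addr_eq0; apply: contraTT m_gt1 => c_neq0.
have dc_neq0 : (d * c)%:P != 0 by rewrite polyC_eq0 mulf_neq0.
by rewrite -leqNgt (leq_trans (dvdp_leq dc_neq0 dvd_dc)) // size_polyC leq_b1.
Qed.

Section PrimeCharacteristic.
Variables (F : fieldType) (q h : nat).
Hypotheses (charFq : q \in [pchar F]) (def_q : q = (h.*2).+1).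

Let charPq : q \in [pchar {poly F}]. Proof. by rewrite pchar_poly. Qed.

(* In both lemmas t is the quadratic Gauss sum modulo the cyclotomic polynomial m. *)
Lemma oppr3_expf_half_eqN1 : (q %% 3 = 2)%N -> (- 3%:R : F) ^+ h = -1.
Proof.
move=> q_mod3; set k := (q %/ 3)%N.
pose m : {poly F} := 'X^2 + 'X + 1.
pose t : {poly F} := 'X - 'X^2.
have cyclo_m : ('X - 1) * m = 'X^3 - 1 by rewrite /m; ring.
have dvd_m j r : m %| 'X^(3 * j + r) - 'X^r.
  by apply: dvdp_subXnX; rewrite -cyclo_m dvdp_mull.
apply: (@expf_half_eqN1_dvdp F h m t).
- by rewrite (size_cofactor_Xn_sub1 _ cyclo_m).
- rewrite oppr_eq0 -(dvdn_pcharf charFq) dvdn_prime2 ?(pcharf_prime charFq) //.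
  by apply: contra_eqN q_mod3 => /eqP->.
- have -> : t ^+ 2 - (- 3%:R)%:P = m * ('X^2 - 'X *+ 3 + 3%:R).
    by rewrite polyCN polyC_natr /m /t; ring.
  exact: dvdp_mulr.
- have -> : t ^+ (h.*2).+1 + t = ('X^(3 * k + 2) - 'X^2) - ('X^(3 * (2 * k + 1) + 1) - 'X^1).
    rewrite -def_q -(pFrobenius_autE charPq) rmorphB /= !pFrobenius_autE -exprM.
    have -> : (3 * k + 2 = q)%N by rewrite /k; lia.
    have -> : (3 * (2 * k + 1) + 1 = 2 * q)%N by rewrite /k; lia.
    by rewrite /t expr1; ring.
  by apply: dvdp_sub; apply: dvd_m.
Qed.

Lemma natr5_expf_half_eqN1 : (q %% 5 = 2)%N -> (5%:R : F) ^+ h = -1.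
Proof.
move=> q_mod5; set k := (q %/ 5)%N.
pose m : {poly F} := 'X^4 + 'X^3 + 'X^2 + 'X + 1.
pose t : {poly F} := 'X - 'X^2 - 'X^3 + 'X^4.
have cyclo_m : ('X - 1) * m = 'X^5 - 1 by rewrite /m; ring.
have dvd_m j r : m %| 'X^(5 * j + r) - 'X^r.
  by apply: dvdp_subXnX; rewrite -cyclo_m dvdp_mull.
apply: (@expf_half_eqN1_dvdp F h m t).
- by rewrite (size_cofactor_Xn_sub1 _ cyclo_m).
- rewrite -(dvdn_pcharf charFq) dvdn_prime2 ?(pcharf_prime charFq) //.
  by apply: contra_eqN q_mod5 => /eqP->.
- have -> : t ^+ 2 - (5%:R)%:P = m * ('X^4 - 'X^3 *+ 3 + 'X^2 + 'X *+ 5 - 5%:R).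
    by rewrite polyC_natr /m /t; ring.
  exact: dvdp_mulr.
- have -> : t ^+ (h.*2).+1 + t = ('X^(5 * k + 2) - 'X^2) - ('X^(5 * (2 * k) + 4) - 'X^4)
      - ('X^(5 * (3 * k + 1) + 1) - 'X^1) + ('X^(5 * (4 * k + 1) + 3) - 'X^3).
    rewrite -def_q -(pFrobenius_autE charPq) !(rmorphB, rmorphD) /= !pFrobenius_autE -!exprM.
    have -> : (5 * k + 2 = q)%N by rewrite /k; lia.
    have -> : (5 * (2 * k) + 4 = 2 * q)%N by rewrite /k; lia.
    have -> : (5 * (3 * k + 1) + 1 = 3 * q)%N by rewrite /k; lia.
    have -> : (5 * (4 * k + 1) + 3 = 4 * q)%N by rewrite /k; lia.
    by rewrite /t expr1 !(mulnC _ q); ring.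
  by apply: dvdp_add; [apply: dvdp_sub; [apply: dvdp_sub|] |]; apply: dvd_m.
Qed.

End PrimeCharacteristic.

Lemma ec_groups_iso_sqr (F : fieldType) (d t : F) :
  t ^+ 2 = d -> t != 0 -> ec_groups_iso d 1.
Proof.
move=> <- t0.
pose f (P : ec_pt F) : ec_pt F := if P is Some (x, y) then Some (x, t * y) else None.
exists f; split.
- by move=> [[x y]|] //=; rewrite mul1r exprMn.
- by move=> [[x1 y1]|] [[x2 y2]|] _ _ //= [-> /(mulfI t0) ->].
- move=> [[x y]|] /= E; last by exists None.
  exists (Some (x, y / t)); last by rewrite /f mulrC divfK.
  by rewrite /= -(eqP E) mul1r expr_div_n mulrC divfK // expf_neq0.
- move=> [[x1 y1]|] [[x2 y2]|] _ _ //=.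
  case: eqP => [<-|_].
  + rewrite -mulrDr mulf_eq0 (negbTE t0) /=; case: ifP => // _.
    (* No hypothesis on 2 is needed: if 2 y1 = 0, both slopes are the junk value _ / 0 = 0. *)
    have -> : (3%:R * x1 ^+ 2 - 1) / (2%:R * 1 * (t * y1))
        = t * ((3%:R * x1 ^+ 2 - 1) / (2%:R * t ^+ 2 * y1)).
      have -> : 2%:R * t ^+ 2 * y1 = t * (2%:R * 1 * (t * y1)) by ring.
      by rewrite [in RHS]invfM [in RHS]mulrCA mulVKf.
    rewrite /f; congr (Some (_, _)); ring.
  + rewrite /f -mulrBr -mulrA; congr (Some (_, _)); ring.
Qed.

Lemma S_pn_sqr p n : S_pn p n = ((p * 4 ^ n) ^ 2).+1.
Proof. by rewrite /S_pn addn1 expnMn -expnM (mulnC n) expnM. Qed.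

Lemma S_pn_half p n : S_pn p n.+1 = (p ^ 2 * 8 * 16 ^ n).*2.+1.
Proof. by rewrite /S_pn (expnS 16) addn1 -muln2; congr _.+1; ring. Qed.

Lemma modn_S_pn p n d :
  (16 %% d = 1)%N -> (p ^ 2 %% d = 1)%N -> (S_pn p n %% d = 2)%N.
Proof.
move=> mod16 modp2; have d_gt2 : (2 < d)%N by case: d {modp2} mod16 => [|[|[|]]].
by rewrite /S_pn -modnDml -modnMm modp2 -modnXm mod16 exp1n mul1n modn_mod modnDml modn_small.
Qed.

Lemma S_pn_gt30 p n : (1 < p)%N -> (30 < S_pn p n.+1)%N.
Proof.
move=> p_gt1; have p2_ge4 : (4 <= p ^ 2)%N by rewrite (@leq_exp2r 2 p 2).
have pow16_gt0 : (0 < 16 ^ n)%N by rewrite expn_gt0.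
by rewrite /S_pn addn1 ltnS (expnS 16) (leq_trans _ (leq_mul p2_ge4 (leq_pmulr 16 pow16_gt0))).
Qed.

Lemma expn2_modn_pm1 p d :
  (1 < d)%N -> (p %% d = 1 \/ p %% d = d.-1)%N -> (p ^ 2 %% d = 1)%N.
Proof.
move=> d_gt1; rewrite -modnXm => -[->|->]; first by rewrite exp1n modn_small.
have -> : (d.-1 ^ 2 = (d - 2) * d + 1)%N by case: d d_gt1 => [|[|d]] //= _; nia.
by rewrite modnMDl modn_small.
Qed.

Lemma sqrtN1_Fp_S_pn p n :
  prime (S_pn p n) -> ((p * 4 ^ n)%:R : 'F_(S_pn p n)) ^+ 2 = -1.
Proof.
by move=> S_prime; apply/eqP; rewrite -subr_eq0 opprK -natrX natr1 -S_pn_sqr pchar_Fp_0.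
Qed.

Lemma natr_Fp_neq0 q k : prime q -> (0 < k < q)%N -> (k%:R : 'F_q) != 0.
Proof.
by move=> q_prime /andP[k_gt0 k_lt_q]; rewrite -(dvdn_pcharf (pchar_Fp q_prime)) gtnNdvd.
Qed.

Section PrimeCongruentPm1Mod10.
Variable p : nat.
Hypotheses (p_prime : prime p) (p_mod10 : (p %% 10 == 1)%N || (p %% 10 == 9)%N).

Lemma S_pn_mod3 n : (S_pn p n %% 3 = 2)%N.
Proof.
apply: modn_S_pn => //; apply: expn2_modn_pm1 => //.
have : ~~ (3 %| p)%N by rewrite dvdn_prime2 //; case/orP: p_mod10 => /eqP; lia.
lia.
Qed.

Lemma S_pn_mod5 n : (S_pn p n %% 5 = 2)%N.
Proof. by apply: modn_S_pn => //; apply: expn2_modn_pm1 => //; case/orP: p_mod10 => /eqP; lia. Qed.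

Lemma prime_S_pn_exp_gt0 n : prime (S_pn p n) -> (0 < n)%N.
Proof.
have p_gt1 := prime_gt1 p_prime; have p_odd : odd p by case/orP: p_mod10 => /eqP; lia.
case: n => // /even_prime[]; rewrite /S_pn expn0 muln1; first by nia.
by rewrite oddD oddX p_odd.
Qed.

End PrimeCongruentPm1Mod10.

Theorem lemma4 (p n : nat) (hp : prime p)
  (hp10 : (p %% 10 == 1)%N || (p %% 10 == 9)%N)
  (hS : prime (S_pn p n)) :
  ec_groups_iso (30%:R : 'F_(S_pn p n)) (1 : 'F_(S_pn p n)).
Proof.
have := prime_S_pn_exp_gt0 hp hp10 hS.
have := S_pn_mod3 hp hp10 n; have := S_pn_mod5 hp hp10 n.
case: n hS => // n; set q := S_pn p n.+1 => q_prime q_mod5 q_mod3 _.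
set h := (p ^ 2 * 8 * 16 ^ n)%N; have def_q : q = h.*2.+1 := S_pn_half p n.
have charFq := pchar_Fp q_prime.
have cardF : #|'F_q| = h.*2.+1 by rewrite card_Fp.
have q_gt30 : (30 < q)%N := S_pn_gt30 n (prime_gt1 hp).
have two_h : (2%:R : 'F_q) ^+ h = 1.
  apply: (natr2_expf_half_eq1 cardF _ (sqrtN1_Fp_S_pn q_prime)).
    by apply: natr_Fp_neq0 q_prime _; lia.
  by rewrite dvdn_mulr // dvdn_mull.
have sign_h : (-1 : 'F_q) ^+ h = 1 by rewrite -signr_odd /h !oddM andbF.
have thirty_h : (30%:R : 'F_q) ^+ h = 1.
  have -> : 30%:R = 2%:R * (-1) * (- 3%:R) * 5%:R :> 'F_q by rewrite mulrN1 mulrNN -!natrM.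
  rewrite !exprMn two_h sign_h (oppr3_expf_half_eqN1 charFq def_q q_mod3).
  by rewrite (natr5_expf_half_eqN1 charFq def_q q_mod5) !mul1r mulrNN mulr1.
have [t sqr_t] := sqr_of_expf_half cardF thirty_h.
apply: (ec_groups_iso_sqr sqr_t).
by apply: contra_eq_neq sqr_t => ->; rewrite expr0n eq_sym natr_Fp_neq0 //; lia.
Qed.
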